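(* (Subject reduction for LPCF.) If $\Gamma;\Delta\vdash e:\tau$ and $e\rightsquigarrow e'$, then $\Gamma;\Delta\vdash e':\tau$.
   Context: LPCF (linear PCF). Types: $\tau ::= \mathsf{Nat}\mid\mathsf{Bool}\mid \tau\,\&\,\tau' \mid \tau\otimes\tau' \mid \tau\multimap\tau' \mid \tau\to\tau'$. Terms: $e ::= x \mid \mathtt{0},\mathtt{1},\mathtt{2},\dots \mid \mathtt{succ}\mid\mathtt{pred}\mid\mathtt{iszero} \mid \lambda x.e \mid e\,e' \mid \mathtt{true}\mid\mathtt{false} \mid \mathtt{if}\ e_1\ \mathtt{then}\ e_2\ \mathtt{else}\ e_3 \mid \langle e_1,e_2\rangle \mid \mathtt{proj}_i(e)\ (i=1,2) \mid \mathtt{fix}_\tau \mid e_1\otimes e_2 \mid \mathtt{let}\ x\otimes y = e\ \mathtt{in}\ e'$. Terms are identified up to renaming of bound variables and $e[e'/x]$ is capture-avoiding substitution. Typing judgements $\Gamma;\Delta\vdash e:\tau$, with $\Gamma$ (non-linear) and $\Delta$ (linear) finite maps from variables to types with disjoint domains ($\Delta,\Delta'$ denotes a disjoint union). Rules: $\Gamma;\emptyset\vdash x:\tau$ if $x:\tau\in\Gamma$; $\Gamma;x:\tau\vdash x:\tau$ if $x\notin\Gamma$; $\Gamma;\emptyset\vdash\mathtt{fix}_\tau:(\tau\to\tau)\to\tau$; $\Gamma;\emptyset\vdash n:\mathsf{Nat}$ for numerals; $\Gamma;\emptyset\vdash\mathtt{succ},\mathtt{pred}:\mathsf{Nat}\multimap\mathsf{Nat}$;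 $\Gamma;\emptyset\vdash\mathtt{iszero}:\mathsf{Nat}\multimap\mathsf{Bool}$; $\Gamma;\emptyset\vdash\mathtt{true},\mathtt{false}:\mathsf{Bool}$; from $\Gamma;\Delta\vdash e_1:\mathsf{Bool}$, $\Gamma;\Delta'\vdash e_2:\tau$, $\Gamma;\Delta'\vdash e_3:\tau$ infer $\Gamma;\Delta,\Delta'\vdash \mathtt{if}\ e_1\ \mathtt{then}\ e_2\ \mathtt{else}\ e_3:\tau$; from $\Gamma;\Delta\vdash e_i:\tau_i$ ($i=1,2$) infer $\Gamma;\Delta\vdash\langle e_1,e_2\rangle:\tau_1\&\tau_2$; from $\Gamma;\Delta\vdash e:\tau_1\&\tau_2$ infer $\Gamma;\Delta\vdash\mathtt{proj}_i(e):\tau_i$; from $\Gamma;\Delta_i\vdash e_i:\tau_i$ infer $\Gamma;\Delta_1,\Delta_2\vdash e_1\otimes e_2:\tau_1\otimes\tau_2$; from $\Gamma;\Delta,x:\tau_1,y:\tau_2\vdash e:\tau$ and $\Gamma;\Delta'\vdash e':\tau_1\otimes\tau_2$ infer $\Gamma;\Delta,\Delta'\vdash\mathtt{let}\ x\otimes y=e'\ \mathtt{in}\ e:\tau$; from $\Gamma,x:\tau;\Delta\vdash e:\tau'$ infer $\Gamma;\Delta\vdash\lambda x.e:\tau\to\tau'$; from $\Gamma;\Delta\vdash e:\tau'\to\tau$ and $\Gamma;\emptyset\vdash e':\tau'$ infer $\Gamma;\Delta\vdash e\,e':\tau$; from $\Gamma;\Delta,x:\tau\vdash e:\tau'$ infer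 $\Gamma;\Delta\vdash\lambda x.e:\tau\multimap\tau'$; from $\Gamma;\Delta\vdash e:\tau'\multimap\tau$ and $\Gamma;\Delta'\vdash e':\tau'$ infer $\Gamma;\Delta,\Delta'\vdash e\,e':\tau$. One-step reduction $\rightsquigarrow$: the least relation containing $(\lambda x.e)e'\rightsquigarrow e[e'/x]$; $\mathtt{fix}_\tau\,e\rightsquigarrow e(\mathtt{fix}_\tau\,e)$; $\mathtt{succ}\,n\rightsquigarrow n+1$; $\mathtt{pred}\,0\rightsquigarrow 0$; $\mathtt{pred}\,n\rightsquigarrow n-1$ ($n\ge1$); $\mathtt{iszero}\,0\rightsquigarrow\mathtt{true}$; $\mathtt{iszero}\,n\rightsquigarrow\mathtt{false}$ ($n\ge1$); $\mathtt{if}\ \mathtt{true}\ \mathtt{then}\ e_1\ \mathtt{else}\ e_2\rightsquigarrow e_1$; $\mathtt{if}\ \mathtt{false}\ \mathtt{then}\ e_1\ \mathtt{else}\ e_2\rightsquigarrow e_2$; $\mathtt{proj}_i\langle e_1,e_2\rangle\rightsquigarrow e_i$; $\mathtt{let}\ x\otimes y=e_1\otimes e_2\ \mathtt{in}\ e\rightsquigarrow e[e_1/x,e_2/y]$; and closed under $\mathcal{E}[e_1]\rightsquigarrow\mathcal{E}[e_2]$ when $e_1\rightsquigarrow e_2$, for evaluation contexts $\mathcal{E}::=[\,]\mid\mathtt{succ}(\mathcal{E})\mid\mathtt{pred}(\mathcal{E})\mid\mathtt{iszero}(\mathcal{E})\mid\mathcal{E}\,e\mid\mathtt{if}\ \mathcal{E}\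 \mathtt{then}\ e_1\ \mathtt{else}\ e_2\mid\mathtt{proj}_i(\mathcal{E})\mid\mathtt{let}\ x\otimes y=\mathcal{E}\ \mathtt{in}\ e$. *)

(* Terms are represented with de Bruijn indices (terms up to alpha-renaming);
   a typing context is one list assigning to each variable index either
   nothing, a non-linear type (an entry of Gamma) or a linear type (an entry
   of Delta); so Gamma and Delta automatically have disjoint domains. *)
From Stdlib Require Import List Arith.
Import ListNotations.

Inductive ty : Type :=
| TNat : ty
| TBool : ty
| TWith : ty -> ty -> ty
| TTensor : ty -> ty -> ty
| TLolli : ty -> ty -> ty
| TArrow : ty -> ty -> ty.

Inductive tm : Type :=
| Var : nat -> tm
| Num : nat -> tm
| Succ : tm
| Pred : tm
| IsZero : tm
| Lam : tm -> tm
| App : tm -> tm -> tm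
| Tru : tm
| Fls : tm
| If : tm -> tm -> tm -> tm
| Pair : tm -> tm -> tm
| Proj1 : tm -> tm
| Proj2 : tm -> tm
| Fix : ty -> tm
| Tens : tm -> tm -> tm
| LetT : tm -> tm -> tm.         (* LetT e' e = let x (x) y = e' in e ;
                                    in e, y is index 0 and x is index 1 *)

Definition scons {A} (a : A) (f : nat -> A) : nat -> A :=
  fun n => match n with 0 => a | S n => f n end.

Definition up_ren (r : nat -> nat) : nat -> nat := scons 0 (fun n => S (r n)).

Fixpoint ren (r : nat -> nat) (e : tm) : tm :=
  match e with
  | Var n => Var (r n)
  | Num n => Num n
  | Succ => Succ | Pred => Pred | IsZero => IsZero
  | Lam b => Lam (ren (up_ren r) b)
  | App a b => App (ren r a) (ren r b)
  | Tru => Tru | Fls => Fls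
  | If a b c => If (ren r a) (ren r b) (ren r c)
  | Pair a b => Pair (ren r a) (ren r b)
  | Proj1 a => Proj1 (ren r a)
  | Proj2 a => Proj2 (ren r a)
  | Fix t => Fix t
  | Tens a b => Tens (ren r a) (ren r b)
  | LetT a b => LetT (ren r a) (ren (up_ren (up_ren r)) b)
  end.

Definition up_sub (s : nat -> tm) : nat -> tm :=
  scons (Var 0) (fun n => ren S (s n)).

Fixpoint subst (s : nat -> tm) (e : tm) : tm :=
  match e with
  | Var n => s n
  | Num n => Num n
  | Succ => Succ | Pred => Pred | IsZero => IsZero
  | Lam b => Lam (subst (up_sub s) b)
  | App a b => App (subst s a) (subst s b)
  | Tru => Tru | Fls => Fls
  | If a b c => If (subst s a) (subst s b) (subst s c)
  | Pair a b => Pair (subst s a) (subst s b)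
  | Proj1 a => Proj1 (subst s a)
  | Proj2 a => Proj2 (subst s a)
  | Fix t => Fix t
  | Tens a b => Tens (subst s a) (subst s b)
  | LetT a b => LetT (subst s a) (subst (up_sub (up_sub s)) b)
  end.

Definition subst1 (e' e : tm) : tm := subst (scons e' Var) e.
Definition subst2 (e1 e2 e : tm) : tm := subst (scons e2 (scons e1 Var)) e.

Inductive step : tm -> tm -> Prop :=
| st_beta : forall e e', step (App (Lam e) e') (subst1 e' e)
| st_fix : forall t e, step (App (Fix t) e) (App e (App (Fix t) e))
| st_succ : forall n, step (App Succ (Num n)) (Num (S n))
| st_pred0 : step (App Pred (Num 0)) (Num 0)
| st_predS : forall n, 1 <= n -> step (App Pred (Num n)) (Num (n - 1))
| st_iszero0 : step (App IsZero (Num 0)) Tru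
| st_iszeroS : forall n, 1 <= n -> step (App IsZero (Num n)) Fls
| st_iftrue : forall e1 e2, step (If Tru e1 e2) e1
| st_iffalse : forall e1 e2, step (If Fls e1 e2) e2
| st_proj1 : forall e1 e2, step (Proj1 (Pair e1 e2)) e1
| st_proj2 : forall e1 e2, step (Proj2 (Pair e1 e2)) e2
| st_let : forall e1 e2 e, step (LetT (Tens e1 e2) e) (subst2 e1 e2 e)
(* closure under evaluation contexts
   E ::= [] | succ(E) | pred(E) | iszero(E) | E e | if E then e1 else e2
       | proj_i(E) | let x (x) y = E in e *)
| st_ctx_succ : forall a b, step a b -> step (App Succ a) (App Succ b)
| st_ctx_pred : forall a b, step a b -> step (App Pred a) (App Pred b)
| st_ctx_iszero : forall a b, step a b -> step (App IsZero a) (App IsZero b)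
| st_ctx_app : forall a b e, step a b -> step (App a e) (App b e)
| st_ctx_if : forall a b e1 e2, step a b -> step (If a e1 e2) (If b e1 e2)
| st_ctx_proj1 : forall a b, step a b -> step (Proj1 a) (Proj1 b)
| st_ctx_proj2 : forall a b, step a b -> step (Proj2 a) (Proj2 b)
| st_ctx_let : forall a b e, step a b -> step (LetT a e) (LetT b e).

Inductive mode : Type := NonLin | Lin.

(* entry i: None = unbound; Some (NonLin, t) = i:t in Gamma;
   Some (Lin, t) = i:t in Delta *)
Definition ctx := list (option (mode * ty)).

Definition lookup (G : ctx) (i : nat) : option (mode * ty) := nth i G None.

Definition no_lin (G : ctx) : Prop :=
  forall i t, lookup G i <> Some (Lin, t).

Definition only_lin (G : ctx) (i : nat) : Prop :=
  forall j t, j <> i -> lookup G j <> Some (Lin, t).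

Definition drop_lin (G : ctx) : ctx :=
  map (fun o => match o with Some (Lin, _) => None | _ => o end) G.

(* ctx_split G G1 G2 : G = Gamma;(Delta1,Delta2), G1 = Gamma;Delta1,
   G2 = Gamma;Delta2 (disjoint union of the linear parts, shared Gamma) *)
Inductive ctx_split : ctx -> ctx -> ctx -> Prop :=
| cs_nil : ctx_split [] [] []
| cs_none : forall G G1 G2, ctx_split G G1 G2 ->
    ctx_split (None :: G) (None :: G1) (None :: G2)
| cs_nonlin : forall t G G1 G2, ctx_split G G1 G2 ->
    ctx_split (Some (NonLin, t) :: G) (Some (NonLin, t) :: G1) (Some (NonLin, t) :: G2)
| cs_lin_l : forall t G G1 G2, ctx_split G G1 G2 ->
    ctx_split (Some (Lin, t) :: G) (Some (Lin, t) :: G1) (None :: G2)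
| cs_lin_r : forall t G G1 G2, ctx_split G G1 G2 ->
    ctx_split (Some (Lin, t) :: G) (None :: G1) (Some (Lin, t) :: G2).

Inductive has_type : ctx -> tm -> ty -> Prop :=
| T_var_nl : forall G i t, lookup G i = Some (NonLin, t) -> no_lin G ->
    has_type G (Var i) t
| T_var_l : forall G i t, lookup G i = Some (Lin, t) -> only_lin G i ->
    has_type G (Var i) t
| T_fix : forall G t, no_lin G -> has_type G (Fix t) (TArrow (TArrow t t) t)
| T_num : forall G n, no_lin G -> has_type G (Num n) TNat
| T_succ : forall G, no_lin G -> has_type G Succ (TLolli TNat TNat)
| T_pred : forall G, no_lin G -> has_type G Pred (TLolli TNat TNat)
| T_iszero : forall G, no_lin G -> has_type G IsZero (TLolli TNat TBool)
| T_true : forall G, no_lin G -> has_type G Tru TBool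
| T_false : forall G, no_lin G -> has_type G Fls TBool
| T_if : forall G G1 G2 e1 e2 e3 t, ctx_split G G1 G2 ->
    has_type G1 e1 TBool -> has_type G2 e2 t -> has_type G2 e3 t ->
    has_type G (If e1 e2 e3) t
| T_pair : forall G e1 e2 t1 t2, has_type G e1 t1 -> has_type G e2 t2 ->
    has_type G (Pair e1 e2) (TWith t1 t2)
| T_proj1 : forall G e t1 t2, has_type G e (TWith t1 t2) -> has_type G (Proj1 e) t1
| T_proj2 : forall G e t1 t2, has_type G e (TWith t1 t2) -> has_type G (Proj2 e) t2
| T_tens : forall G G1 G2 e1 e2 t1 t2, ctx_split G G1 G2 ->
    has_type G1 e1 t1 -> has_type G2 e2 t2 -> has_type G (Tens e1 e2) (TTensor t1 t2)
| T_let : forall G G1 G2 e e' t1 t2 t, ctx_split G G1 G2 ->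
    has_type (Some (Lin, t2) :: Some (Lin, t1) :: G1) e t ->
    has_type G2 e' (TTensor t1 t2) ->
    has_type G (LetT e' e) t
| T_lam_arrow : forall G e t t', has_type (Some (NonLin, t) :: G) e t' ->
    has_type G (Lam e) (TArrow t t')
| T_app_arrow : forall G e e' t t', has_type G e (TArrow t' t) ->
    has_type (drop_lin G) e' t' -> has_type G (App e e') t
| T_lam_lolli : forall G e t t', has_type (Some (Lin, t) :: G) e t' ->
    has_type G (Lam e) (TLolli t t')
| T_app_lolli : forall G G1 G2 e e' t t', ctx_split G G1 G2 ->
    has_type G1 e (TLolli t' t) -> has_type G2 e' t' -> has_type G (App e e') t.

(* Beta-reduction and the tensor let substitute terms for variables, so they
   rest on substitution lemmas, proved for a variable at an arbitrary de
   Bruijn position [k] so that the induction passes under binders.  A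
   non-linear variable may be replaced by a term typed in the non-linear part
   of the context, which every premise shares; a linear variable occurs in
   exactly one premise of each multiplicative rule, so the linear context of
   the substituted term follows it into that premise, while the other premise
   is merely strengthened.  The remaining redexes are handled by inversion,
   and the congruence cases hold because the hole of each evaluation context
   is typed by a premise of the corresponding rule. *)

From Stdlib Require Import List.
Import ListNotations.

(** * Renaming and substitution *)

Lemma ren_ext r r' e : (forall n, r n = r' n) -> ren r e = ren r' e.
Proof.
  revert r r'; induction e; intros r r' H; simpl; f_equal; auto.
  - apply IHe; intros [|n]; simpl; auto.
  - apply IHe2; intros [|[|n]]; simpl; auto.
Qed.

Lemma subst_ext s s' e : (forall n, s n = s' n) -> subst s e = subst s' e.
Proof.
  revert s s'; induction e; intros s s' H; simpl; f_equal; auto.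
  - apply IHe; intros [|n]; unfold up_sub; simpl; rewrite ?H; auto.
  - apply IHe2; intros [|[|n]]; unfold up_sub; simpl; rewrite ?H; auto.
Qed.

Lemma ren_ren r r' e : ren r (ren r' e) = ren (fun n => r (r' n)) e.
Proof.
  revert r r'; induction e; intros r r'; simpl; f_equal; auto.
  - rewrite IHe; apply ren_ext; intros [|n]; reflexivity.
  - rewrite IHe2; apply ren_ext; intros [|[|n]]; reflexivity.
Qed.

Lemma subst_ren s r e : subst s (ren r e) = subst (fun n => s (r n)) e.
Proof.
  revert s r; induction e; intros s r; simpl; f_equal; auto.
  - rewrite IHe; apply subst_ext; intros [|n]; reflexivity.
  - rewrite IHe2; apply subst_ext; intros [|[|n]]; reflexivity.
Qed.

Lemma ren_subst r s e : ren r (subst s e) = subst (fun n => ren r (s n)) e.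
Proof.
  revert s r; induction e; intros s r; simpl; f_equal; auto.
  - rewrite IHe; apply subst_ext; intros [|n]; unfold up_sub; simpl; auto.
    rewrite !ren_ren; apply ren_ext; reflexivity.
  - rewrite IHe2; apply subst_ext; intros [|[|n]]; unfold up_sub; simpl; auto.
    rewrite !ren_ren; apply ren_ext; reflexivity.
Qed.

Lemma up_sub_ext s s' n : (forall m, s m = s' m) -> up_sub s n = up_sub s' n.
Proof. intros H; destruct n; unfold up_sub; simpl; rewrite ?H; auto. Qed.

Lemma subst_up_sub s u n :
  subst (up_sub u) (up_sub s n) = up_sub (fun m => subst u (s m)) n.
Proof.
  destruct n; unfold up_sub; simpl; auto.
  rewrite subst_ren, ren_subst; apply subst_ext; reflexivity.
Qed.

Lemma subst_subst s u e : subst u (subst s e) = subst (fun n => subst u (s n)) e.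
Proof.
  revert s u; induction e; intros s u; simpl; f_equal; auto.
  - rewrite IHe; apply subst_ext; intros n; apply subst_up_sub.
  - rewrite IHe2; apply subst_ext; intros n.
    rewrite subst_up_sub; apply up_sub_ext; intros m; apply subst_up_sub.
Qed.

Lemma subst_id e : subst Var e = e.
Proof.
  induction e; simpl; f_equal; auto.
  - rewrite <- IHe at 2; apply subst_ext; intros [|n]; reflexivity.
  - rewrite <- IHe2 at 2; apply subst_ext; intros [|[|n]]; reflexivity.
Qed.

(* [insert_at k x G] puts the entry [x] at index [k], padding a too short
   context with [None]; [lift k] renames the old indices into the new
   context and [subst_at e' k] replaces index [k] by [e'], shifted under the
   [k] binders in front of it, and lowers the indices above it. *)
Fixpoint insert_at (k : nat) (x : option (mode * ty)) (G : ctx) : ctx :=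
  match k, G with
  | 0, _ => x :: G
  | S k, [] => None :: insert_at k x []
  | S k, y :: G => y :: insert_at k x G
  end.

Fixpoint lift (k : nat) : nat -> nat :=
  match k with 0 => S | S k => up_ren (lift k) end.

Fixpoint subst_at (e' : tm) (k : nat) : nat -> tm :=
  match k with 0 => scons e' Var | S k => up_sub (subst_at e' k) end.

Lemma lift_inj k i j : lift k i = lift k j -> i = j.
Proof.
  revert i j; induction k; intros i j; simpl; [congruence|].
  destruct i, j; simpl; intros H; try discriminate; auto.
Qed.

Lemma lift_neq k j : lift k j <> k.
Proof.
  revert j; induction k; intros j; simpl; [discriminate|].
  destruct j; simpl; [discriminate|].
  intros H; injection H; apply IHk.
Qed.

Lemma eq_or_lift k i : i = k \/ exists j, i = lift k j.
Proof.
  revert i; induction k; intros i.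
  - destruct i; [left | right; exists i]; reflexivity.
  - destruct i as [|i]; [right; exists 0; reflexivity|].
    destruct (IHk i) as [->|[j ->]]; [left | right; exists (S j)]; reflexivity.
Qed.

Lemma subst_at_lift e' k j : subst_at e' k (lift k j) = Var j.
Proof.
  revert j; induction k; intros j; simpl; auto.
  destruct j; unfold up_sub; simpl; auto.
  rewrite IHk; reflexivity.
Qed.

Lemma subst2_as_subst_at e1 e2 e :
  subst (subst_at e2 0) (subst (subst_at e1 1) e) = subst2 e1 e2 e.
Proof.
  unfold subst2; rewrite subst_subst; apply subst_ext.
  intros [|[|n]]; unfold up_sub; simpl; auto.
  rewrite subst_ren; apply subst_id.
Qed.

(** * Contexts *)

Definition nonlin_entry (x : option (mode * ty)) : Prop :=
  forall u, x <> Some (Lin, u).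

Lemma lookup_insert_at k x G : lookup (insert_at k x G) k = x.
Proof.
  unfold lookup; revert G; induction k; intros [|y G]; simpl; auto.
Qed.

Lemma lookup_insert_at_lift k x G i :
  lookup (insert_at k x G) (lift k i) = lookup G i.
Proof.
  unfold lookup; revert G i; induction k; intros G i; simpl; auto.
  destruct i, G; simpl; auto; rewrite IHk; destruct i; reflexivity.
Qed.

Lemma no_lin_insert_at k x G :
  no_lin (insert_at k x G) <-> no_lin G /\ nonlin_entry x.
Proof.
  unfold no_lin, nonlin_entry; split.
  - intros H; split.
    + intros i t; rewrite <- (lookup_insert_at_lift k x); apply H.
    + intros u; rewrite <- (lookup_insert_at k x G); apply H.
  - intros [HG Hx] i t; destruct (eq_or_lift k i) as [->|[j ->]].
    + rewrite lookup_insert_at; auto.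
    + rewrite lookup_insert_at_lift; auto.
Qed.

Lemma no_lin_insert_at_lin k u G : ~ no_lin (insert_at k (Some (Lin, u)) G).
Proof. intros H; apply no_lin_insert_at in H as [_ H]; eapply H; eauto. Qed.

Lemma only_lin_insert_at k x G i :
  only_lin (insert_at k x G) (lift k i) <-> only_lin G i /\ nonlin_entry x.
Proof.
  unfold only_lin, nonlin_entry; split.
  - intros H; split.
    + intros j t Hj; rewrite <- (lookup_insert_at_lift k x).
      apply H; intros E; apply Hj; eapply lift_inj; eauto.
    + intros u; rewrite <- (lookup_insert_at k x G).
      apply H; intros E; symmetry in E; eapply lift_neq; eauto.
  - intros [HG Hx] j t Hj; destruct (eq_or_lift k j) as [->|[j' ->]].
    + rewrite lookup_insert_at; auto.
    + rewrite lookup_insert_at_lift; auto.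
Qed.

Lemma only_lin_insert_at_self k x G : only_lin (insert_at k x G) k -> no_lin G.
Proof.
  intros H i t; rewrite <- (lookup_insert_at_lift k x).
  apply H, lift_neq.
Qed.

Lemma no_lin_cons x G : no_lin (x :: G) -> no_lin G /\ nonlin_entry x.
Proof. intros H; split; [intros i t; apply (H (S i)) | intros u; apply (H 0)]. Qed.

Definition drop_lin_entry (x : option (mode * ty)) : option (mode * ty) :=
  match x with Some (Lin, _) => None | _ => x end.

Lemma drop_lin_entry_nonlin x : nonlin_entry x -> drop_lin_entry x = x.
Proof. destruct x as [[[] t]|]; auto; intros H; exfalso; eapply H; eauto. Qed.

Lemma drop_lin_cons x G : drop_lin (x :: G) = drop_lin_entry x :: drop_lin G.
Proof. reflexivity. Qed.

Lemma drop_lin_insert_at k x G :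
  drop_lin (insert_at k x G) = insert_at k (drop_lin_entry x) (drop_lin G).
Proof. revert G; induction k; intros [|y G]; simpl; rewrite ?IHk; auto. Qed.

Lemma drop_lin_idem G : drop_lin (drop_lin G) = drop_lin G.
Proof. induction G as [|[[[] ?]|] G IH]; simpl; f_equal; auto. Qed.

Lemma drop_lin_no_lin G : no_lin G -> drop_lin G = G.
Proof.
  induction G as [|x G IH]; simpl; auto; intros H.
  apply no_lin_cons in H as [H Hx]; rewrite IH; auto.
  destruct x as [[[] t]|]; auto; exfalso; eapply Hx; eauto.
Qed.

Lemma ctx_split_comm G G1 G2 : ctx_split G G1 G2 -> ctx_split G G2 G1.
Proof. induction 1; constructor; auto. Qed.

Lemma ctx_split_assoc F Gx E A B :
  ctx_split F Gx E -> ctx_split Gx A B ->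
  exists F1, ctx_split F F1 B /\ ctx_split F1 A E.
Proof.
  intros H; revert A B; induction H; intros A B HS; inversion HS; subst;
    try (destruct (IHctx_split _ _ ltac:(eassumption)) as (F1 & ? & ?);
         eexists (_ :: F1); split; constructor; eauto).
  exists []; split; constructor.
Qed.

Lemma ctx_split_no_lin_l F A E : ctx_split F A E -> no_lin A -> F = E.
Proof.
  induction 1; intros Hn; auto; apply no_lin_cons in Hn as [Hn Hx]; f_equal; auto.
  exfalso; eapply Hx; eauto.
Qed.

Lemma ctx_split_drop_lin F A B :
  ctx_split F A B -> drop_lin A = drop_lin F /\ drop_lin B = drop_lin F.
Proof. induction 1; simpl; intuition congruence. Qed.

Lemma ctx_split_insert_at_inv k x G H1 H2 :
  ctx_split (insert_at k x G) H1 H2 ->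
  exists x1 x2 G1 G2, H1 = insert_at k x1 G1 /\ H2 = insert_at k x2 G2 /\
    ctx_split [x] [x1] [x2] /\ ctx_split G G1 G2.
Proof.
  revert x G H1 H2; induction k; intros x G H1 H2 H.
  - inversion H; subst; do 4 eexists; repeat split; eauto; repeat constructor.
  - destruct G as [|y G]; simpl in H; inversion H; subst;
      match goal with Hk : ctx_split (insert_at k _ _) _ _ |- _ =>
        destruct (IHk _ _ _ _ Hk) as (x1 & x2 & A & B & -> & -> & Hx & HAB) end;
      [inversion HAB; subst; exists x1, x2, [], [] | eexists x1, x2, (_ :: A), (_ :: B) ..];
      repeat split; eauto; constructor; auto.
Qed.

Lemma ctx_split_insert_at_nonlin k x G H1 H2 :
  nonlin_entry x -> ctx_split (insert_at k x G) H1 H2 ->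
  exists G1 G2, H1 = insert_at k x G1 /\ H2 = insert_at k x G2 /\ ctx_split G G1 G2.
Proof.
  intros Hx H;
    apply ctx_split_insert_at_inv in H as (x1 & x2 & G1 & G2 & -> & -> & Hs & HG).
  inversion Hs; subst; eauto; exfalso; eapply Hx; eauto.
Qed.

Lemma ctx_split_insert_at_lin k u Gx F E H1 H2 :
  ctx_split (insert_at k (Some (Lin, u)) Gx) H1 H2 -> ctx_split F Gx E ->
  (exists A B F1, H1 = insert_at k (Some (Lin, u)) A /\ H2 = insert_at k None B /\
     ctx_split F F1 B /\ ctx_split F1 A E) \/
  (exists A B F2, H1 = insert_at k None A /\ H2 = insert_at k (Some (Lin, u)) B /\
     ctx_split F A F2 /\ ctx_split F2 B E).
Proof.
  intros H HF;
    apply ctx_split_insert_at_inv in H as (x1 & x2 & A & B & -> & -> & Hs & HAB).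
  inversion Hs; subst.
  - destruct (ctx_split_assoc _ _ _ _ _ HF HAB) as (F1 & ? & ?); left; eauto 7.
  - destruct (ctx_split_assoc _ _ _ _ _ HF (ctx_split_comm _ _ _ HAB)) as (F2 & ? & ?).
    right; exists A, B, F2; repeat split; auto; apply ctx_split_comm; auto.
Qed.

Lemma ctx_split_insert_at k x x1 x2 G G1 G2 :
  ctx_split [x] [x1] [x2] -> ctx_split G G1 G2 ->
  ctx_split (insert_at k x G) (insert_at k x1 G1) (insert_at k x2 G2).
Proof.
  revert G G1 G2; induction k; intros G G1 G2 Hx H.
  - inversion Hx; subst; constructor; auto.
  - inversion H; subst; simpl; constructor; auto; apply IHk; auto; constructor.
Qed.

Lemma ctx_split_nonlin_entry x : nonlin_entry x -> ctx_split [x] [x] [x].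
Proof.
  intros Hx; destruct x as [[[] t]|]; repeat constructor.
  exfalso; eapply Hx; eauto.
Qed.

(** * Structural properties of typing *)

Lemma has_type_weaken G e t k x :
  has_type G e t -> nonlin_entry x ->
  has_type (insert_at k x G) (ren (lift k) e) t.
Proof.
  intros He; revert k x; induction He; intros k x Hx; simpl;
    try (constructor; apply no_lin_insert_at; auto; fail);
    try (econstructor; [apply ctx_split_insert_at; eauto using ctx_split_nonlin_entry | ..];
         eauto; fail).
  - apply T_var_nl; [rewrite lookup_insert_at_lift | apply no_lin_insert_at]; auto.
  - apply T_var_l; [rewrite lookup_insert_at_lift | apply only_lin_insert_at]; auto.
  - constructor; auto.
  - econstructor; eauto.
  - econstructor; eauto.
  - eapply T_let; [apply ctx_split_insert_at; eauto using ctx_split_nonlin_entry | | auto].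
    apply (IHHe1 (S (S k))); auto.
  - constructor; apply (IHHe (S k)); auto.
  - eapply T_app_arrow; eauto.
    rewrite drop_lin_insert_at, drop_lin_entry_nonlin; auto.
  - constructor; apply (IHHe (S k)); auto.
Qed.

Lemma has_type_shift G e t x :
  nonlin_entry x -> has_type G e t -> has_type (x :: G) (ren S e) t.
Proof. intros Hx He; exact (has_type_weaken G e t 0 x He Hx). Qed.

Lemma nonlin_entry_None : nonlin_entry None.
Proof. intros u; discriminate. Qed.

Lemma nonlin_entry_NonLin t : nonlin_entry (Some (NonLin, t)).
Proof. intros u; discriminate. Qed.

Lemma nonlin_entry_drop_lin_entry x : nonlin_entry (drop_lin_entry x).
Proof. destruct x as [[[] t]|]; intros u; discriminate. Qed.

#[local] Hint Resolve
  nonlin_entry_None nonlin_entry_NonLin nonlin_entry_drop_lin_entry : core.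

Lemma has_type_subst_unused k G e e' t :
  has_type (insert_at k None G) e t -> has_type G (subst (subst_at e' k) e) t.
Proof.
  intros He; remember (insert_at k None G) as H eqn:EH.
  revert k G EH; induction He; intros k G0 EH; subst; simpl;
    try (constructor; apply no_lin_insert_at in H; tauto);
    try (apply ctx_split_insert_at_nonlin in H as (A & B & -> & -> & HAB); auto;
         econstructor; eauto; fail).
  - destruct (eq_or_lift k i) as [->|[j ->]];
      [rewrite lookup_insert_at in H; discriminate|].
    rewrite subst_at_lift; rewrite lookup_insert_at_lift in H.
    apply no_lin_insert_at in H0; apply T_var_nl; tauto.
  - destruct (eq_or_lift k i) as [->|[j ->]];
      [rewrite lookup_insert_at in H; discriminate|].
    rewrite subst_at_lift; rewrite lookup_insert_at_lift in H.
    apply only_lin_insert_at in H0; apply T_var_l; tauto.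
  - constructor; eauto.
  - econstructor; eauto.
  - econstructor; eauto.
  - apply ctx_split_insert_at_nonlin in H as (A & B & -> & -> & HAB); auto.
    eapply T_let; eauto; apply (IHHe1 (S (S k))); reflexivity.
  - constructor; apply (IHHe (S k)); reflexivity.
  - eapply T_app_arrow; eauto; apply IHHe2; rewrite drop_lin_insert_at; reflexivity.
  - constructor; apply (IHHe (S k)); reflexivity.
Qed.

Lemma has_type_subst_nonlin k u G e e' t :
  has_type (insert_at k (Some (NonLin, u)) G) e t ->
  has_type (drop_lin G) (subst_at e' k k) u ->
  has_type G (subst (subst_at e' k) e) t.
Proof.
  intros He; remember (insert_at k (Some (NonLin, u)) G) as H eqn:EH.
  revert k G EH; induction He; intros k G0 EH He'; subst; simpl;
    try (constructor; apply no_lin_insert_at in H; tauto);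
    try (apply ctx_split_insert_at_nonlin in H as (A & B & -> & -> & HAB); auto;
         destruct (ctx_split_drop_lin _ _ _ HAB);
         econstructor; eauto; first [eapply IHHe1 | eapply IHHe2 | eapply IHHe3];
         eauto; congruence).
  - destruct (eq_or_lift k i) as [->|[j ->]].
    + rewrite lookup_insert_at in H; injection H; intros ->.
      apply no_lin_insert_at in H0 as [H0 _].
      rewrite drop_lin_no_lin in He'; auto.
    + rewrite subst_at_lift; rewrite lookup_insert_at_lift in H.
      apply no_lin_insert_at in H0; apply T_var_nl; tauto.
  - destruct (eq_or_lift k i) as [->|[j ->]];
      [rewrite lookup_insert_at in H; discriminate|].
    rewrite subst_at_lift; rewrite lookup_insert_at_lift in H.
    apply only_lin_insert_at in H0; apply T_var_l; tauto.
  - constructor; eauto.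
  - econstructor; eauto.
  - econstructor; eauto.
  - apply ctx_split_insert_at_nonlin in H as (A & B & -> & -> & HAB); auto.
    destruct (ctx_split_drop_lin _ _ _ HAB).
    eapply T_let; eauto.
    + apply (IHHe1 (S (S k))); [reflexivity|].
      rewrite !drop_lin_cons, H; apply has_type_shift; auto; apply has_type_shift; auto.
    + eapply IHHe2; eauto; congruence.
  - constructor; apply (IHHe (S k)); [reflexivity|].
    rewrite drop_lin_cons; apply has_type_shift; auto.
  - eapply T_app_arrow; eauto; eapply IHHe2.
    + rewrite drop_lin_insert_at; reflexivity.
    + rewrite drop_lin_idem; auto.
  - constructor; apply (IHHe (S k)); [reflexivity|].
    apply has_type_shift; auto.
Qed.

Lemma has_type_subst_lin k u Gx F E e e' t :
  has_type (insert_at k (Some (Lin, u)) Gx) e t -> ctx_split F Gx E ->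
  has_type E (subst_at e' k k) u ->
  has_type F (subst (subst_at e' k) e) t.
Proof.
  intros He; remember (insert_at k (Some (Lin, u)) Gx) as H eqn:EH.
  revert k Gx F E EH; induction He; intros k Gx F E EH HF He'; subst; simpl;
    try (exfalso; eapply no_lin_insert_at_lin; eassumption);
    try (destruct (ctx_split_insert_at_lin _ _ _ _ _ _ _ H HF)
           as [(A & B & F1 & -> & -> & ? & ?)|(A & B & F2 & -> & -> & ? & ?)];
         econstructor; eauto using has_type_subst_unused; fail).
  - destruct (eq_or_lift k i) as [->|[j ->]].
    + rewrite lookup_insert_at in H; injection H; intros ->.
      apply only_lin_insert_at_self in H0.
      rewrite (ctx_split_no_lin_l _ _ _ HF H0); auto.
    + apply only_lin_insert_at in H0 as [_ H0]; exfalso; eapply H0; eauto.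
  - constructor; eauto.
  - econstructor; eauto.
  - econstructor; eauto.
  - destruct (ctx_split_insert_at_lin _ _ _ _ _ _ _ H HF)
      as [(A & B & F1 & -> & -> & HF1B & HF1)|(A & B & F2 & -> & -> & HAF2 & HF2)].
    + eapply T_let; [eauto | | eapply has_type_subst_unused; eauto].
      apply (IHHe1 (S (S k)) (Some (Lin, t2) :: Some (Lin, t1) :: A) _ (None :: None :: E));
        [reflexivity | repeat constructor; auto |].
      apply has_type_shift; auto; apply has_type_shift; auto.
    + eapply T_let; [eauto | | eauto].
      apply (has_type_subst_unused (S (S k)) (Some (Lin, t2) :: Some (Lin, t1) :: A)); auto.
  - constructor; apply (IHHe (S k) (Some (NonLin, t) :: Gx) _ (Some (NonLin, t) :: E));
      [reflexivity | constructor; auto |].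
    apply has_type_shift; auto.
  - eapply T_app_arrow; eauto; eapply has_type_subst_unused.
    destruct (ctx_split_drop_lin _ _ _ HF) as [<- _].
    rewrite drop_lin_insert_at in He2; exact He2.
  - constructor; apply (IHHe (S k) (Some (Lin, t) :: Gx) _ (None :: E));
      [reflexivity | constructor; auto |].
    apply has_type_shift; auto.
Qed.

(** * Subject reduction *)

Definition preserves (e e' : tm) : Prop :=
  forall G t, has_type G e t -> has_type G e' t.

Lemma has_type_app_inv G a b t :
  has_type G (App a b) t ->
  (exists t', has_type G a (TArrow t' t) /\ has_type (drop_lin G) b t') \/
  (exists t' G1 G2, ctx_split G G1 G2 /\ has_type G1 a (TLolli t' t) /\ has_type G2 b t').
Proof. intros H; inversion H; subst; [left | right]; eauto 10. Qed.

Lemma beta_preserves e e' : preserves (App (Lam e) e') (subst1 e' e).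
Proof.
  intros G t H; apply has_type_app_inv in H
    as [(t' & Hf & Ha)|(t' & G1 & G2 & HG & Hf & Ha)]; inversion Hf; subst.
  - eapply (has_type_subst_nonlin 0); eauto.
  - eapply (has_type_subst_lin 0); eauto.
Qed.

Lemma fix_preserves u e : preserves (App (Fix u) e) (App e (App (Fix u) e)).
Proof.
  intros G t H; apply has_type_app_inv in H
    as [(t' & Hf & Ha)|(t' & G1 & G2 & HG & Hf & Ha)]; inversion Hf; subst.
  rewrite drop_lin_no_lin in Ha by auto.
  apply T_app_arrow with t; auto.
  rewrite drop_lin_no_lin by auto.
  apply T_app_arrow with (TArrow t t); auto.
  rewrite drop_lin_no_lin; auto.
Qed.

Definition lolli_const (c : tm) (s r : ty) : Prop :=
  forall G t, has_type G c t -> no_lin G /\ t = TLolli s r.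

Lemma lolli_const_Succ : lolli_const Succ TNat TNat.
Proof. intros G t H; inversion H; auto. Qed.

Lemma lolli_const_Pred : lolli_const Pred TNat TNat.
Proof. intros G t H; inversion H; auto. Qed.

Lemma lolli_const_IsZero : lolli_const IsZero TNat TBool.
Proof. intros G t H; inversion H; auto. Qed.

Lemma app_lolli_const_inv c s r G a t :
  lolli_const c s r -> has_type G (App c a) t -> t = r /\ has_type G a s.
Proof.
  intros Hc H; apply has_type_app_inv in H
    as [(t' & Hf & Ha)|(t' & G1 & G2 & HG & Hf & Ha)];
    apply Hc in Hf as [Hn E]; try discriminate.
  injection E; intros -> ->; rewrite (ctx_split_no_lin_l _ _ _ HG Hn); auto.
Qed.

Lemma app_lolli_const_num_preserves c r n v :
  lolli_const c TNat r -> (forall G, no_lin G -> has_type G v r) ->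
  preserves (App c (Num n)) v.
Proof.
  intros Hc Hv G t H; apply (app_lolli_const_inv _ _ _ _ _ _ Hc) in H as [-> Hn].
  inversion Hn; auto.
Qed.

Lemma app_lolli_const_arg_compat c s r a b :
  lolli_const c s r -> preserves a b -> preserves (App c a) (App c b).
Proof.
  intros Hc Hab G t H; apply has_type_app_inv in H
    as [(t' & Hf & _)|(t' & G1 & G2 & HG & Hf & Ha)];
    pose proof (Hc _ _ Hf) as [_ E]; try discriminate.
  eapply T_app_lolli; eauto.
Qed.

Lemma app_fun_compat a b e : preserves a b -> preserves (App a e) (App b e).
Proof.
  intros Hab G t H; apply has_type_app_inv in H
    as [(t' & Hf & Ha)|(t' & G1 & G2 & HG & Hf & Ha)].
  - eapply T_app_arrow; eauto.
  - eapply T_app_lolli; eauto.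
Qed.

Lemma has_type_if_inv G a b c t :
  has_type G (If a b c) t ->
  exists G1 G2, ctx_split G G1 G2 /\ has_type G1 a TBool /\
    has_type G2 b t /\ has_type G2 c t.
Proof. intros H; inversion H; subst; eauto 10. Qed.

Lemma if_no_lin_cond_inv b e1 e2 G t :
  (forall G' t', has_type G' b t' -> no_lin G') ->
  has_type G (If b e1 e2) t -> has_type G e1 t /\ has_type G e2 t.
Proof.
  intros Hb H; apply has_type_if_inv in H as (G1 & G2 & HG & Hc & H1 & H2).
  rewrite (ctx_split_no_lin_l _ _ _ HG (Hb _ _ Hc)); auto.
Qed.

Lemma if_true_preserves e1 e2 : preserves (If Tru e1 e2) e1.
Proof.
  intros G t H; apply (if_no_lin_cond_inv Tru e1 e2) in H; [tauto|].
  intros G' t' Hc; inversion Hc; auto.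
Qed.

Lemma if_false_preserves e1 e2 : preserves (If Fls e1 e2) e2.
Proof.
  intros G t H; apply (if_no_lin_cond_inv Fls e1 e2) in H; [tauto|].
  intros G' t' Hc; inversion Hc; auto.
Qed.

Lemma if_compat a b e1 e2 : preserves a b -> preserves (If a e1 e2) (If b e1 e2).
Proof. intros Hab G t H; inversion H; subst; eapply T_if; eauto. Qed.

Lemma proj1_pair_preserves e1 e2 : preserves (Proj1 (Pair e1 e2)) e1.
Proof.
  intros G t H; inversion H; subst.
  match goal with Hp : has_type _ (Pair _ _) _ |- _ => inversion Hp; subst end; auto.
Qed.

Lemma proj2_pair_preserves e1 e2 : preserves (Proj2 (Pair e1 e2)) e2.
Proof.
  intros G t H; inversion H; subst.
  match goal with Hp : has_type _ (Pair _ _) _ |- _ => inversion Hp; subst end; auto.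
Qed.

Lemma proj1_compat a b : preserves a b -> preserves (Proj1 a) (Proj1 b).
Proof. intros Hab G t H; inversion H; subst; eapply T_proj1; eauto. Qed.

Lemma proj2_compat a b : preserves a b -> preserves (Proj2 a) (Proj2 b).
Proof. intros Hab G t H; inversion H; subst; eapply T_proj2; eauto. Qed.

Lemma has_type_let_inv G a b t :
  has_type G (LetT a b) t ->
  exists G1 G2 t1 t2, ctx_split G G1 G2 /\
    has_type (Some (Lin, t2) :: Some (Lin, t1) :: G1) b t /\
    has_type G2 a (TTensor t1 t2).
Proof. intros H; inversion H; subst; eauto 10. Qed.

Lemma has_type_tens_inv G a b t1 t2 :
  has_type G (Tens a b) (TTensor t1 t2) ->
  exists G1 G2, ctx_split G G1 G2 /\ has_type G1 a t1 /\ has_type G2 b t2.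
Proof. intros H; inversion H; subst; eauto 10. Qed.

(* [e1] is substituted first, at index 1, into a body that still binds [y]. *)
Lemma let_tensor_preserves e1 e2 e : preserves (LetT (Tens e1 e2) e) (subst2 e1 e2 e).
Proof.
  intros G t H; apply has_type_let_inv in H as (G1 & G2 & t1 & t2 & HG & Hb & Ht).
  apply has_type_tens_inv in Ht as (G21 & G22 & HG2 & He1 & He2).
  destruct (ctx_split_assoc _ _ _ _ _ (ctx_split_comm _ _ _ HG) HG2) as (F1 & HF & HF1).
  rewrite <- subst2_as_subst_at.
  apply (has_type_subst_lin 0 t2 F1 G G22); auto.
  apply (has_type_subst_lin 1 t1 (Some (Lin, t2) :: G1) _ (None :: G21)); auto.
  - constructor; apply ctx_split_comm; auto.
  - apply has_type_shift; auto.
Qed.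

Lemma let_compat a b e : preserves a b -> preserves (LetT a e) (LetT b e).
Proof. intros Hab G t H; inversion H; subst; eapply T_let; eauto. Qed.

Theorem proposition2 (G : ctx) (e e' : tm) (t : ty) :
  has_type G e t -> step e e' -> has_type G e' t.
Proof.
  intros He Hs; revert G t He; change (preserves e e').
  induction Hs.
  - apply beta_preserves.
  - apply fix_preserves.
  - apply (app_lolli_const_num_preserves _ TNat); auto using lolli_const_Succ, T_num.
  - apply (app_lolli_const_num_preserves _ TNat); auto using lolli_const_Pred, T_num.
  - apply (app_lolli_const_num_preserves _ TNat); auto using lolli_const_Pred, T_num.
  - apply (app_lolli_const_num_preserves _ TBool); auto using lolli_const_IsZero, T_true.
  - apply (app_lolli_const_num_preserves _ TBool); auto using lolli_const_IsZero, T_false.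
  - apply if_true_preserves.
  - apply if_false_preserves.
  - apply proj1_pair_preserves.
  - apply proj2_pair_preserves.
  - apply let_tensor_preserves.
  - apply (app_lolli_const_arg_compat _ TNat TNat); auto using lolli_const_Succ.
  - apply (app_lolli_const_arg_compat _ TNat TNat); auto using lolli_const_Pred.
  - apply (app_lolli_const_arg_compat _ TNat TBool); auto using lolli_const_IsZero.
  - apply app_fun_compat; auto.
  - apply if_compat; auto.
  - apply proj1_compat; auto.
  - apply proj2_compat; auto.
  - apply let_compat; auto.
Qed.
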